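(* Let $k$ be a commutative ring, $P$ an invertible $k$-module, $Q=P^*$, and $A$ a $P$-Frobenius $k$-algebra with Frobenius system $(\psi,x_i,q_i,y_i)$ such that $u=\sum_iq_i\otimes y_ix_i\in Q\otimes_kA$ is Morita-invertible. Then $A$ is strongly separable.
   Context: $A$ is $P$-Frobenius if it is finitely generated projective over $k$ and $A_A\cong\mathrm{Hom}_k(A,P)_A$, where $(\psi a)(x)=\psi(ax)$. A Frobenius system consists of $\psi\in\mathrm{Hom}_k(A,P)$ such that $a\mapsto\psi a$ is an isomorphism $A\to\mathrm{Hom}_k(A,P)$, and finitely many $x_i,y_i\in A$, $q_i\in Q$ with $\sum_ix_i\,q_i(\psi(y_ia))=a$ and $\sum_iq_i(\psi(ax_i))\,y_i=a$ for all $a\in A$. An element $\sum_iq_i\otimes a_i\in Q\otimes A$ is Morita-invertible if there is $\sum_jp_j\otimes b_j\in P\otimes A$ with $\sum_{i,j}q_i(p_j)a_ib_j=1_A$. $A$ is strongly separable (Kanzaki) if there is $e=\sum_jz_j\otimes w_j\in A\otimes A$ with $\sum_jz_jw_j=1_A$ and $\sum_jz_ja\otimes w_j=\sum_jz_j\otimes aw_j$ for all $a\in A$. *)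

From HB Require Import structures.
From mathcomp Require Import all_boot all_order all_algebra.
Set Implicit Arguments. Unset Strict Implicit. Unset Printing Implicit Defensive.
Import GRing.Theory.
Local Open Scope ring_scope.

Section Defs.
Variable k : comPzRingType.

Definition bilinear_map (M N W : lmodType k) (b : M -> N -> W) : Prop :=
  (forall (c : k) (m m' : M) (n : N), b (c *: m + m') n = c *: b m n + b m' n) /\
  (forall (c : k) (m : M) (n n' : N), b m (c *: n + n') = c *: b m n + b m n').

(* Two finite formal sums  sum_i m_i (x) n_i  and  sum_j m'_j (x) n'_j
   (given by their lists of pairs) denote the same element of M (x)_k N.
   This is the universal property of the tensor product: they are equal iff
   every k-bilinear map out of M x N takes the same value on them. *)
Definition tensor_eq (M N : lmodType k) (s t : seq (M * N)) : Prop :=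
  forall (W : lmodType k) (b : M -> N -> W), bilinear_map b ->
    \sum_(x <- s) b x.1 x.2 = \sum_(x <- t) b x.1 x.2.

Definition fg_projective (M : lmodType k) : Prop :=
  exists (n : nat) (f : {linear M -> 'rV[k]_n}) (g : {linear 'rV[k]_n -> M}),
    forall m, g (f m) = m.

(* P is an invertible k-module: there is a k-module Q with P (x)_k Q ~= k,
   i.e. a bilinear b : P x Q -> k whose induced linear map P (x) Q -> k is
   bijective. *)
Definition invertible_module (P : lmodType k) : Prop :=
  exists (Q : lmodType k) (b : P -> Q -> k^o),
    [/\ bilinear_map b,
        (forall c : k, exists s : seq (P * Q), \sum_(x <- s) b x.1 x.2 = c) &
        (forall s t : seq (P * Q),
            \sum_(x <- s) b x.1 x.2 = \sum_(x <- t) b x.1 x.2 -> tensor_eq s t)].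

Definition ract (A : algType k) (P : lmodType k) (psi : {linear A -> P}) (a : A)
  : A -> P := fun x => psi (a * x).

(* A is P-Frobenius: f.g. projective over k and A_A ~= Hom_k(A,P)_A as right
   A-modules. *)
Definition P_Frobenius (P : lmodType k) (A : algType k) : Prop :=
  fg_projective A /\
  exists f : A -> {linear A -> P},
    [/\ (forall a b x, f (a + b) x = f a x + f b x),
        (forall a b x, f (a * b) x = ract (f a) b x),
        (forall a b, (forall x, f a x = f b x) -> a = b) &
        (forall phi : {linear A -> P}, exists a, forall x, f a x = phi x)].

Definition Frobenius_system (P : lmodType k) (A : algType k)
  (psi : {linear A -> P}) (n : nat)
  (x y : 'I_n -> A) (q : 'I_n -> {linear P -> k^o}) : Prop :=
  [/\ (forall a b, (forall z, ract psi a z = ract psi b z) -> a = b),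
      (forall phi : {linear A -> P}, exists a, forall z, ract psi a z = phi z),
      (forall a : A, \sum_(i < n) ((q i (psi (y i * a)) : k) *: x i) = a) &
      (forall a : A, \sum_(i < n) ((q i (psi (a * x i)) : k) *: y i) = a)].

Definition Morita_invertible (P : lmodType k) (A : algType k) (n : nat)
  (q : 'I_n -> {linear P -> k^o}) (a : 'I_n -> A) : Prop :=
  exists s : seq (P * A),
    \sum_(i < n) \sum_(pb <- s) ((q i pb.1 : k) *: (a i * pb.2)) = 1.

Definition strongly_separable (A : algType k) : Prop :=
  exists e : seq (A * A),
    \sum_(zw <- e) zw.1 * zw.2 = 1 /\
    forall a : A,
      tensor_eq [seq (zw.1 * a, zw.2) | zw <- e] [seq (zw.1, a * zw.2) | zw <- e].

End Defs.

(* For an invertible module P the tensor product P (x) P is symmetric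
   elementwise: q p * q' p' = q p' * q' p for all functionals q, q' on P.
   Indeed, writing 1 = sum_j b(p_j, w_j) through P (x) Q ~ k, every
   generator c = b(u, w) satisfies c^2 (q p * q' p' - q p' * q' p) = 0, and
   an element killed by the squares of elements summing to 1 is 0.
   With this symmetry the dual-basis identities of the Frobenius system show
   that e = sum_(i, j) q_i(p_j) y_i (x) x_i b_j, where sum_j p_j (x) b_j is
   the Morita inverse of u, is a separability idempotent: e multiplies out to
   u times its inverse, and expanding y_i a and a x_i in the dual bases turns
   e a and a e into the same double sum up to an exchange of indices. *)
From HB Require Import structures.
From mathcomp Require Import all_boot all_order all_algebra.
From mathcomp Require Import ring.
Set Implicit Arguments. Unset Strict Implicit. Unset Printing Implicit Defensive.
Import GRing.Theory.
Local Open Scope ring_scope.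

Section BilinearMap.
Variables (k : comPzRingType) (M N W : lmodType k) (b : M -> N -> W).
Hypothesis b_bilinear : bilinear_map b.

Lemma bilinearDl m m' n : b (m + m') n = b m n + b m' n.
Proof. by have := b_bilinear.1 1 m m' n; rewrite !scale1r. Qed.

Lemma bilinearDr m n n' : b m (n + n') = b m n + b m n'.
Proof. by have := b_bilinear.2 1 m n n'; rewrite !scale1r. Qed.

Lemma bilinear0l n : b 0 n = 0.
Proof. by apply: (addrI (b 0 n)); rewrite -bilinearDl !addr0. Qed.

Lemma bilinear0r m : b m 0 = 0.
Proof. by apply: (addrI (b m 0)); rewrite -bilinearDr !addr0. Qed.

Lemma bilinearZl c m n : b (c *: m) n = c *: b m n.
Proof. by have := b_bilinear.1 c m 0 n; rewrite addr0 bilinear0l addr0. Qed.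

Lemma bilinearZr c m n : b m (c *: n) = c *: b m n.
Proof. by have := b_bilinear.2 c m n 0; rewrite addr0 bilinear0r addr0. Qed.

Lemma bilinear_suml I (r : seq I) (F : I -> M) n :
  b (\sum_(i <- r) F i) n = \sum_(i <- r) b (F i) n.
Proof.
by elim: r => [|i r IHr]; rewrite ?big_nil ?bilinear0l // !big_cons bilinearDl IHr.
Qed.

Lemma bilinear_sumr I (r : seq I) (F : I -> N) m :
  b m (\sum_(i <- r) F i) = \sum_(i <- r) b m (F i).
Proof.
by elim: r => [|i r IHr]; rewrite ?big_nil ?bilinear0r // !big_cons bilinearDr IHr.
Qed.

End BilinearMap.

Section SquareAnnihilator.
Variables (R : comPzRingType) (V : lmodType R).

Lemma exprSD_mod_sqr (a s : R) m :
  exists g, (a + s) ^+ m.+1 = s ^+ m.+1 + (a * s ^+ m) *+ m.+1 + a ^+ 2 * g.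
Proof.
elim: m => [|m [g IHm]]; first by exists 0; rewrite mulr0 addr0 mulr1 addrC.
by exists (s ^+ m *+ m.+1 + (a + s) * g); rewrite exprS IHm !exprS; ring.
Qed.

Lemma sum_expr_size_scale_eq0 I (r : seq I) (f : I -> R) (z : V) :
  (forall i, f i ^+ 2 *: z = 0) -> (\sum_(i <- r) f i) ^+ (size r).+1 *: z = 0.
Proof.
move=> fz0; elim: r => [|i r IHr]; first by rewrite big_nil expr1 scale0r.
rewrite big_cons /=; move: IHr; set s := \sum_(j <- r) f j; move: (size r) => m sz0.
have [g ->] := exprSD_mod_sqr (f i) s m.+1.
rewrite scalerDl [X in X + _]scalerDl exprS -scalerA sz0 scaler0 add0r.
by rewrite -scalerMnl -scalerA sz0 scaler0 mul0rn add0r mulrC -scalerA fz0 scaler0.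
Qed.

Lemma sqr_annihilated_eq0 I (r : seq I) (f : I -> R) (z : V) :
  \sum_(i <- r) f i = 1 -> (forall i, f i ^+ 2 *: z = 0) -> z = 0.
Proof.
by move=> f_sum1 /(sum_expr_size_scale_eq0 r); rewrite f_sum1 expr1n scale1r.
Qed.

End SquareAnnihilator.

Section InvertibleModule.
Variables (k : comPzRingType) (P Q : lmodType k) (b : P -> Q -> k^o).
Hypothesis b_bilinear : bilinear_map b.
Hypothesis b_tensor_inj : forall s t : seq (P * Q),
  \sum_(x <- s) b x.1 x.2 = \sum_(x <- t) b x.1 x.2 -> tensor_eq s t.
Variable s0 : seq (P * Q).
Hypothesis s0_sum1 : \sum_(x <- s0) b x.1 x.2 = 1.

Lemma bilinear_factor (W : lmodType k) (beta : P -> Q -> W) u w :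
  bilinear_map beta -> beta u w = (b u w : k) *: \sum_(x <- s0) beta x.1 x.2.
Proof.
move=> beta_bilinear.
have uw_eq : tensor_eq [:: (u, w)] [seq ((b u w : k) *: x.1, x.2) | x <- s0].
  apply: b_tensor_inj; rewrite big_seq1 big_map.
  under eq_bigr do rewrite (bilinearZl b_bilinear).
  by rewrite -scaler_sumr s0_sum1 [RHS]mulr1.
have := uw_eq W beta beta_bilinear; rewrite big_seq1 big_map /= => ->.
by rewrite scaler_sumr; apply: eq_bigr => x _; rewrite (bilinearZl beta_bilinear).
Qed.

Lemma functional_mul_swap (q q' : {linear P -> k^o}) (p p' : P) :
  (q p : k) * (q' p' : k) = (q p' : k) * (q' p : k).
Proof.
pose lambda (r : {linear P -> k^o}) u := \sum_(x <- s0) (b u x.2 : k) * (r x.1 : k).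
have b_functional (r : {linear P -> k^o}) u v w :
    (b u w : k) * (r v : k) = (b v w : k) * lambda r u.
  apply: (@bilinear_factor k^o (fun v w => (b u w : k) * (r v : k)) v w).
  split=> [c m m' n | c m n n'].
    by rewrite linearD linearZ /= mulrDr mulrCA.
  by rewrite (bilinearDr b_bilinear) (bilinearZr b_bilinear) mulrDl -mulrA.
apply/subr0_eq.
apply: (sqr_annihilated_eq0 (V := k^o) s0_sum1) => -[u w] /=.
set c := (b u w : k).
change (c ^+ 2 * ((q p : k) * (q' p' : k) - (q p' : k) * (q' p : k)) = 0).
have -> : c ^+ 2 * ((q p : k) * (q' p' : k) - (q p' : k) * (q' p : k)) =
    c * (q p : k) * (c * (q' p' : k)) - c * (q p' : k) * (c * (q' p : k)) by ring.
by rewrite !b_functional; ring.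
Qed.

End InvertibleModule.

Lemma invertible_module_mul_swap (k : comPzRingType) (P : lmodType k) :
  invertible_module P -> forall (q q' : {linear P -> k^o}) (p p' : P),
  (q p : k) * (q' p' : k) = (q p' : k) * (q' p : k).
Proof.
move=> [Q [b [b_bilinear b_surj b_tensor_inj]]].
have [s0 s0_sum1] := b_surj 1.
exact: (functional_mul_swap b_bilinear b_tensor_inj s0_sum1).
Qed.

Section SeparabilityElement.
Variables (k : comPzRingType) (P : lmodType k) (A : algType k).
Variables (psi : {linear A -> P}) (n : nat) (x y : 'I_n -> A).
Variable q : 'I_n -> {linear P -> k^o}.
Hypothesis dual_basis_x : forall a, \sum_(i < n) (q i (psi (y i * a)) : k) *: x i = a.
Hypothesis dual_basis_y : forall a, \sum_(i < n) (q i (psi (a * x i)) : k) *: y i = a.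
Hypothesis q_mul_swap : forall i j (p p' : P),
  (q i p : k) * (q j p' : k) = (q i p' : k) * (q j p : k).

Definition separability_element (s : seq (P * A)) : seq (A * A) :=
  [seq ((q i pb.1 : k) *: y i, x i * pb.2) | i <- index_enum 'I_n, pb <- s].

Lemma separability_element_mul (s : seq (P * A)) :
  \sum_(i < n) \sum_(pb <- s) (q i pb.1 : k) *: (y i * x i * pb.2) = 1 ->
  \sum_(zw <- separability_element s) zw.1 * zw.2 = 1.
Proof.
move=> <-; rewrite big_allpairs_dep; apply: eq_bigr => i _.
by apply: eq_bigr => pb _; rewrite -scalerAl mulrA.
Qed.

Lemma separability_element_central (s : seq (P * A)) (a : A) :
  tensor_eq [seq (zw.1 * a, zw.2) | zw <- separability_element s]
            [seq (zw.1, a * zw.2) | zw <- separability_element s].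
Proof.
move=> W beta beta_bilinear; rewrite !big_map !big_allpairs_dep /=.
have expand_left i pb : beta ((q i pb.1 : k) *: y i * a) (x i * pb.2) =
    \sum_(l < n) ((q i pb.1 : k) * (q l (psi (y i * a * x l)) : k)) *:
      beta (y l) (x i * pb.2).
  rewrite -scalerAl (bilinearZl beta_bilinear) -{1}(dual_basis_y (y i * a)).
  rewrite (bilinear_suml beta_bilinear) scaler_sumr; apply: eq_bigr => l _.
  by rewrite (bilinearZl beta_bilinear) scalerA.
have expand_right i pb : beta ((q i pb.1 : k) *: y i) (a * (x i * pb.2)) =
    \sum_(l < n) ((q i pb.1 : k) * (q l (psi (y l * (a * x i))) : k)) *:
      beta (y i) (x l * pb.2).
  rewrite (bilinearZl beta_bilinear) mulrA -{1}(dual_basis_x (a * x i)) mulr_suml.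
  rewrite (bilinear_sumr beta_bilinear) scaler_sumr; apply: eq_bigr => l _.
  by rewrite -scalerAl (bilinearZr beta_bilinear) scalerA.
under eq_bigr do under eq_bigr do rewrite expand_left.
under [RHS]eq_bigr do under eq_bigr do rewrite expand_right.
rewrite exchange_big [RHS]exchange_big; apply: eq_bigr => pb _.
rewrite [RHS]exchange_big; apply: eq_bigr => i _; apply: eq_bigr => l _.
by rewrite q_mul_swap mulrC mulrA.
Qed.

End SeparabilityElement.

Theorem proposition6p5 (k : comPzRingType) (P : lmodType k) (A : algType k)
  (psi : {linear A -> P}) (n : nat) (x y : 'I_n -> A)
  (q : 'I_n -> {linear P -> k^o}) :
  invertible_module P ->
  P_Frobenius P A ->
  Frobenius_system psi x y q ->
  Morita_invertible q (fun i => y i * x i) ->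
  strongly_separable A.
Proof.
move=> P_invertible _ [_ _ dual_basis_x dual_basis_y] [s u_inverse].
exists (separability_element x y q s); split.
  exact: separability_element_mul.
apply: (separability_element_central dual_basis_x dual_basis_y) => i j.
exact: invertible_module_mul_swap.
Qed.
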